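(* Let $m\ge 2$ be an integer and let $\mathcal{A}\subset\mathbb{R}$ be a finite alphabet. Let $(X^{(j)}_i)_{i\ge 1,\,1\le j\le m}$ be independent and identically distributed random variables with values in $\mathcal{A}$. Let $S:\mathcal{A}^m\to[0,\infty)$ be a function that is not identically zero, is invariant under permutations of its $m$ arguments, satisfies $\sup_{x\in\mathcal{A}^m}S(x)<\infty$, and for which there is a constant $D>0$ such that $|S(x)-S(y)|\le D$ whenever $x,y\in\mathcal{A}^m$ differ in at most one coordinate. For $q=(q_1,\dots,q_m)$ in the domain $Q:=\{q\in(0,\infty)^m:\ q_1+\cdots+q_m=m\}$ let $$\widetilde{\gamma}^*(q):=\lim_{n\to\infty}\frac1n\,\mathbb{E}\Big(L\big(X^{(1)}_1\cdots X^{(1)}_{\lceil nq_1\rceil};\ \cdots;\ X^{(m)}_1\cdots X^{(m)}_{\lceil nq_m\rceil}\big)\Big).$$ Then $\widetilde{\gamma}^*$ is concave on $Q$. In particular, $\widetilde{\gamma}^*$ attains its maximum over $Q$ at $q_1=\cdots=q_m=1$.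
   Context: Alignments and optimal score: for finite words $w^{(1)},\dots,w^{(m)}$ over $\mathcal{A}$ of lengths $\ell_1,\dots,\ell_m$, an alignment is a choice of an integer $k\ge 0$ and, for each $j$, indices $1\le \pi^{(j)}_1<\cdots<\pi^{(j)}_k\le \ell_j$; its score is $\sum_{i=1}^k S(w^{(1)}_{\pi^{(1)}_i},\dots,w^{(m)}_{\pi^{(m)}_i})$. The optimal score $L(w^{(1)};\dots;w^{(m)})$ is the maximum score over all alignments. The limit defining $\widetilde{\gamma}^*$ exists (by superadditivity). *)

From HB Require Import structures.
From mathcomp Require Import all_boot all_order all_algebra.
From mathcomp Require Import finmap.
From mathcomp Require Import all_classical all_reals all_analysis.
Set Implicit Arguments.
Unset Strict Implicit.
Unset Printing Implicit Defensive.
Import Order.TTheory GRing.Theory Num.Theory.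
Local Open Scope classical_set_scope.
Local Open Scope ring_scope.
Local Open Scope fset_scope.

Section Align.
Variables (R : realType) (A : {fset R}) (m : nat).

Definition apoint := {ffun 'I_m -> A}.

Variable S : apoint -> R.

(* An alignment of the words w_1,...,w_m: an integer k and, for each j,
   strictly increasing indices pi_j : {0..k-1} -> {0..|w_j|-1}
   (0-based version of 1 <= pi_1 < ... < pi_k <= l_j). *)
Definition is_alignment (w : 'I_m -> seq A) (k : nat)
    (pi : forall j : 'I_m, 'I_k -> 'I_(size (w j))) : Prop :=
  forall (j : 'I_m) (i1 i2 : 'I_k), (i1 < i2)%N -> (pi j i1 < pi j i2)%N.

Definition align_score (w : 'I_m -> seq A) (k : nat)
    (pi : forall j : 'I_m, 'I_k -> 'I_(size (w j))) : R :=
  \sum_(i < k) S [ffun j => tnth (in_tuple (w j)) (pi j i)].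

Definition opt_score (w : 'I_m -> seq A) : R :=
  sup [set r : R | exists k (pi : forall j : 'I_m, 'I_k -> 'I_(size (w j))),
                     is_alignment pi /\ r = align_score pi].

(* The i.i.d. letters X^(j)_i, 1 <= j <= m, 1 <= i <= N, each with law p on A,
   are realised on the finite sample space {ffun 'I_m * 'I_N -> A} with the
   product probability  omega |-> prod_(j,i) p (omega (j,i)). *)
Definition sample_prob (p : A -> R) (N : nat) (omega : {ffun 'I_m * 'I_N -> A}) : R :=
  \prod_(x : 'I_m * 'I_N) p (omega x).

Definition sample_word (N : nat) (omega : {ffun 'I_m * 'I_N -> A})
    (ns : 'I_m -> nat) (j : 'I_m) : seq A :=
  take (ns j) [seq omega (j, i) | i <- enum 'I_N].

Definition expected_L (p : A -> R) (ns : 'I_m -> nat) : R :=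
  let N := (\max_(j < m) ns j)%N in
  \sum_(omega : {ffun 'I_m * 'I_N -> A})
     sample_prob p omega * opt_score (sample_word omega ns).

Definition gamma_tilde (p : A -> R) (q : 'I_m -> R) : R :=
  lim ((fun n : nat =>
          (expected_L p (fun j => `|Num.ceil (n%:R * q j)|%N) / n%:R : R^o))
         @ \oo).

End Align.

Definition domQ (R : realType) (m : nat) (q : 'I_m -> R) : Prop :=
  (forall j, 0 < q j) /\ \sum_(j < m) q j = m%:R.

(* Write F l for the expected optimal score of the words of lengths l. F is
   superadditive, because optimal alignments of consecutive blocks concatenate;
   it is Lipschitz for the l1 distance with constant sup S, because dropping a
   letter destroys at most one column; and it is invariant under permuting the
   words, because S is symmetric and the letters are i.i.d. Superadditivity up
   to a bounded error gives the limit gamma q = lim F(ceil(n q))/n as in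
   Fekete's lemma. Cutting n into floor(t n) + floor((1 - t) n) and using
   superadditivity and the Lipschitz bound gives concavity. Finally gamma is
   permutation invariant, so by concavity gamma q is at most gamma of the
   average of q over all permutations of its coordinates, which is the vector
   (1, ..., 1) when the q j sum to m. *)

From HB Require Import structures.
From mathcomp Require Import all_boot all_order all_algebra.
From mathcomp Require Import finmap perm.
From mathcomp Require Import all_classical all_reals all_analysis.
From mathcomp Require Import ring lra.
Set Implicit Arguments.
Unset Strict Implicit.
Unset Printing Implicit Defensive.
Import Order.TTheory GRing.Theory Num.Theory.
Local Open Scope classical_set_scope.
Local Open Scope ring_scope.

Section Fekete.
Variable R : realType.
Implicit Types (h u : nat -> R) (C K : R).

Lemma cvg_div_nat (c : R) : (fun n : nat => c / n%:R : R^o) @ \oo --> 0.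
Proof.
rewrite -(mulr0 c); apply: cvgMr.
apply/gtr0_cvgV0; last exact: cvgr_idn.
by near=> n; rewrite ltr0n; near: n.
Unshelve. all: end_near. Qed.

Section Superadditive.
Variable h : nat -> R.
Hypothesis h_superadd : forall a b, h a + h b <= h (a + b)%N.

Lemma superadditive_mulnD k r d : d%:R * h k + h r <= h (d * k + r)%N.
Proof.
elim: d => [|d IH]; first by rewrite mul0r add0r mul0n add0n.
rewrite mulSn -addnA; apply: le_trans (h_superadd _ _).
by rewrite -nat1r mulrDl mul1r -addrA lerD2l.
Qed.

Lemma superadditive_ratio_ge C : (forall n, - C <= h n) -> forall k n,
  (0 < k)%N -> (0 < n)%N -> h k / k%:R - (`|h k| + C) / n%:R <= h n / n%:R.
Proof.
move=> hC k n k0 n0.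
have k0' : 0 < (k%:R : R) by rewrite ltr0n.
have n0' : 0 < (n%:R : R) by rewrite ltr0n.
have /= := superadditive_mulnD k (n %% k) (n %/ k).
rewrite -divn_eq => hdiv.
have eR : (n%:R : R) = (n %/ k)%:R * k%:R + (n %% k)%:R by rewrite -natrM -natrD -divn_eq.
have rk : ((n %% k)%:R : R) < k%:R by rewrite ltr_nat ltn_mod.
have key : n%:R * h k - k%:R * (`|h k| + C) <= h n * k%:R.
  have := hC (n %% k)%N; have := ler0n R (n %/ k)%N; have := ler0n R (n %% k)%N.
  have [hk0|hk0] := lerP 0 (h k); first by rewrite ger0_norm // eR; nra.
  by rewrite ltr0_norm // eR; nra.
have -> : h k / k%:R - (`|h k| + C) / n%:R
    = (n%:R * h k - k%:R * (`|h k| + C)) / (n%:R * k%:R).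
  by field; rewrite !gt_eqF.
have -> : h n / n%:R = h n * k%:R / (n%:R * k%:R) by field; rewrite !gt_eqF.
by rewrite ler_wpM2r // invr_ge0 ltW // mulr_gt0.
Qed.

Lemma cvg_ratio_superadditive C K : (forall n, - C <= h n) ->
  (forall n, (0 < n)%N -> h n <= K * n%:R) ->
  cvg ((fun n => h n / n%:R : R^o) @ \oo).
Proof.
move=> hC hK.
pose E := [set h n / n%:R | n in [set n | (0 < n)%N]].
have ubE : ubound E K by move=> _ [n n0 <-]; rewrite ler_pdivrMr ?ltr0n ?hK.
have supE : has_sup E by split; [exists (h 1%N / 1); exists 1%N | exists K].
apply: (cvgP (sup E : R^o)); apply/cvgrPdist_le => e e0.
have e20 : 0 < e / 2 by rewrite divr_gt0.
have [_ [k k0 <-] supk] := sup_adherent e20 supE.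
near=> n.
have n0 : (0 < n)%N by near: n; exact: nbhs_infty_gt.
have n0' : 0 < (n%:R : R) by rewrite ltr0n.
have le_sup : h n / n%:R <= sup E by apply: ub_le_sup (proj2 supE) _ _; exists n.
have small : (`|h k| + C) / n%:R <= e / 2.
  rewrite ler_pdivrMr // mulrC -ler_pdivrMr //.
  by near: n; exact: nbhs_infty_ger.
have := superadditive_ratio_ge hC k0 n0.
rewrite ler_norml; lra.
Unshelve. all: end_near. Qed.
End Superadditive.

Lemma cvg_ratio_quasi_superadditive u C K :
  (forall a b, u a + u b - C <= u (a + b)%N) -> (forall n, 0 <= u n) ->
  (forall n, (0 < n)%N -> u n <= K * n%:R) ->
  cvg ((fun n => u n / n%:R : R^o) @ \oo).
Proof.
move=> u_add u0 uK.
have C0 : 0 <= C by have := u_add 0%N 0%N; have := u0 0%N; rewrite addn0; lra.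
pose h n := u n - C.
have h_add a b : h a + h b <= h (a + b)%N by rewrite /h; have := u_add a b; lra.
have hC n : - C <= h n by rewrite /h; have := u0 n; lra.
have hK n : (0 < n)%N -> h n <= K * n%:R.
  by move=> n0; rewrite /h; have := uK n n0; lra.
have h_cvg := cvg_ratio_superadditive h_add hC hK.
apply: (cvgP (lim ((fun n => h n / n%:R : R^o) @ \oo) + 0)).
rewrite (_ : (fun n => _) = (fun n => h n / n%:R + C / n%:R)).
  exact: cvgD h_cvg (cvg_div_nat C).
by apply/funext => n; rewrite /h mulrBl subrK.
Qed.
End Fekete.

Section PermSums.
Variables (V : nmodType) (m : nat) (f : 'I_m -> V).

Lemma sum_perm_indep j k : \sum_(s : 'S_m) f (s j) = \sum_(s : 'S_m) f (s k).
Proof.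
rewrite (reindex_inj (mulgI (tperm j k))); apply: eq_bigr => s _.
by rewrite permM tpermL.
Qed.

Lemma sum_perm_mulrn j : (\sum_(s : 'S_m) f (s j)) *+ m = (\sum_i f i) *+ #|'S_m|.
Proof.
transitivity (\sum_(k < m) \sum_(s : 'S_m) f (s k)).
  by rewrite (eq_bigr _ (fun k _ => sum_perm_indep k j)) sumr_const card_ord.
rewrite exchange_big -sumr_const; apply: eq_bigr => s _.
by rewrite [RHS](reindex_inj (@perm_inj _ s)).
Qed.

End PermSums.

Section Rate.
Variables (R : realType) (m : nat) (F : ('I_m -> nat) -> R) (B : R).
Hypothesis B0 : 0 <= B.
Hypothesis F0 : forall l, 0 <= F l.
Hypothesis F_superadd : forall l l', F l + F l' <= F (fun j => (l j + l' j)%N).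
Hypothesis F_lipschitz :
  forall l l', F l - F l' <= B * \sum_j `|(l j)%:R - (l' j)%:R|.
Implicit Types (q : 'I_m -> R) (t : R).

Definition ceil_len q (n : nat) : 'I_m -> nat :=
  fun j => `|Num.ceil (n%:R * q j)|%N.

Definition rate q : R := lim ((fun n : nat => (F (ceil_len q n) / n%:R : R^o)) @ \oo).

Lemma ceil_len_bounds q n j : 0 <= q j ->
  n%:R * q j <= (ceil_len q n j)%:R < n%:R * q j + 1.
Proof.
move=> q0; rewrite /ceil_len natr_absz ger0_norm; last first.
  by rewrite ceil_ge0 // (lt_le_trans _ (mulr_ge0 (ler0n _ _) q0)) // ltrN10.
have := ceil_itv (n%:R * q j); rewrite intrD => /andP[lb ub].
by rewrite ub /=; move: lb; rewrite (_ : (-1)%:~R = -1 :> R) //; lra.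
Qed.

Lemma F_ceil_len_quasi_superadditive q a b : (forall j, 0 <= q j) ->
  F (ceil_len q a) + F (ceil_len q b) - B * (2 * m%:R)
  <= F (ceil_len q (a + b)%N).
Proof.
move=> q0; set la := ceil_len q a; set lb := ceil_len q b.
have := F_superadd la lb.
have := F_lipschitz (fun j => (la j + lb j)%N) (ceil_len q (a + b)).
have : B * \sum_j `|(la j + lb j)%:R - (ceil_len q (a + b) j)%:R| <= B * (2 * m%:R).
  have -> : 2 * m%:R = \sum_(j < m) (2 : R) by rewrite sumr_const card_ord mulr_natr.
  apply: ler_wpM2l => //; apply: ler_sum => j _.
  have := ceil_len_bounds a (q0 j); have := ceil_len_bounds b (q0 j).
  have := ceil_len_bounds (a + b) (q0 j).
  rewrite !natrD ler_norml => /andP[? ?] /andP[? ?] /andP[? ?].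
  by apply/andP; split; nra.
lra.
Qed.

Lemma F_ceil_len_linear q n : (forall j, 0 <= q j) -> (0 < n)%N ->
  F (ceil_len q n) <= (F (fun _ => 0%N) + B * \sum_j (q j + 1)) * n%:R.
Proof.
move=> q0 n0; have n1 : (1 : R) <= n%:R by rewrite ler1n.
have := F_lipschitz (ceil_len q n) (fun _ => 0%N).
have : B * \sum_j `|(ceil_len q n j)%:R - (0%N)%:R| <= (B * \sum_j (q j + 1)) * n%:R.
  rewrite -mulrA; apply: ler_wpM2l => //; rewrite mulr_suml; apply: ler_sum => j _.
  have := ceil_len_bounds n (q0 j); rewrite subr0 ger0_norm //.
  have := q0 j; nra.
have := F0 (fun _ => 0%N); nra.
Qed.

Lemma rate_cvg q : (forall j, 0 <= q j) ->
  (fun n : nat => (F (ceil_len q n) / n%:R : R^o)) @ \oo --> (rate q : R^o).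
Proof.
move=> q0; apply: (cvg_ratio_quasi_superadditive (C := B * (2 * m%:R))).
- by move=> a b; exact: F_ceil_len_quasi_superadditive.
- by move=> n; exact: F0.
- by move=> n; exact: F_ceil_len_linear.
Qed.

Definition floor_scale t (n : nat) : nat := Num.truncn (n%:R * t).

Lemma floor_scale_bounds t n : 0 <= t ->
  (floor_scale t n)%:R <= n%:R * t < (floor_scale t n)%:R + 1.
Proof. by move=> t0; rewrite natr1 truncn_itv // mulr_ge0. Qed.

Lemma floor_scale_cvgn t : 0 < t -> floor_scale t @ \oo --> \oo.
Proof.
move=> t0; apply/cvgnyPge => k; near=> n.
rewrite truncn_ge_nat ?mulr_ge0 ?(ltW t0) // -ler_pdivrMr //.
by near: n; exact: nbhs_infty_ger.
Unshelve. all: end_near. Qed.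

Lemma floor_scale_ratio_cvg t : 0 <= t ->
  (fun n => ((floor_scale t n)%:R / n%:R : R^o)) @ \oo --> (t : R^o).
Proof.
move=> t0; apply: (@squeeze_cvgr _ _ _ _ (fun n => t - 1 / n%:R) (fun _ => t)).
- near=> n; have n0 : 0 < (n%:R : R) by rewrite ltr0n; near: n.
  have /andP[lb ub] := floor_scale_bounds n t0.
  have -> : t - 1 / n%:R = (n%:R * t - 1) / n%:R by field; rewrite gt_eqF.
  rewrite [X in _ <= _ <= X](_ : t = n%:R * t / n%:R); last by field; rewrite gt_eqF.
  by rewrite !ler_pM2r ?invr_gt0 //; apply/andP; split; lra.
- by rewrite -[X in _ --> X]subr0; apply: cvgB; [exact: cvg_cst | exact: cvg_div_nat].
- exact: (cvg_cst (t : R^o)).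
Unshelve. all: end_near. Qed.

Lemma cvg_rate_floor_scale q t : (forall j, 0 <= q j) -> 0 <= t ->
  (fun n => (F (ceil_len q (floor_scale t n)) / n%:R : R^o)) @ \oo --> (t * rate q : R^o).
Proof.
move=> q0; rewrite le_eqVlt => /predU1P[<-|t0].
  rewrite mul0r (_ : floor_scale 0 = fun _ => 0%N); first exact: cvg_div_nat.
  by apply/funext => n; rewrite /floor_scale mulr0 truncn0.
have comp := cvg_comp _ _ (floor_scale_cvgn t0) (rate_cvg q0).
apply: cvg_trans (cvgM (floor_scale_ratio_cvg (ltW t0)) comp).
apply: near_eq_cvg; near=> n => /=.
have fl0 : (floor_scale t n)%:R != 0 :> R.
  by rewrite pnatr_eq0 -lt0n; near: n; exact: (cvgnyPgt _).1 (floor_scale_cvgn t0) 0%N.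
by rewrite mulrC mulrA divfK.
Unshelve. all: end_near. Qed.

Lemma ceil_len_mix_gap q1 q2 t n j : 0 <= q1 j -> 0 <= q2 j -> 0 <= t <= 1 ->
  `|(ceil_len q1 (floor_scale t n) j + ceil_len q2 (floor_scale (1 - t) n) j)%:R
    - (ceil_len (fun j => t * q1 j + (1 - t) * q2 j) n j)%:R| <= q1 j + q2 j + 2.
Proof.
move=> q10 q20 /andP[t0 t1]; set q := fun j => _.
have q0 : 0 <= q j by rewrite addr_ge0 // mulr_ge0 // subr_ge0.
have /andP[aL aU] := floor_scale_bounds n t0.
have /andP[bL bU] : (floor_scale (1 - t) n)%:R <= n%:R * (1 - t)
                    < (floor_scale (1 - t) n)%:R + 1.
  by apply: floor_scale_bounds; rewrite subr_ge0.
set a := floor_scale t n in aL aU *; set b := floor_scale (1 - t) n in bL bU *.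
have da : 0 <= (n%:R * t - a%:R) * q1 j <= q1 j.
  by apply/andP; split; nra.
have db : 0 <= (n%:R * (1 - t) - b%:R) * q2 j <= q2 j.
  by apply/andP; split; nra.
have := ceil_len_bounds a q10; have := ceil_len_bounds b q20.
have := ceil_len_bounds n q0; rewrite /q natrD ler_norml.
move: da db => /andP[? ?] /andP[? ?] /andP[? ?] /andP[? ?] /andP[? ?].
by apply/andP; split; nra.
Qed.

Lemma F_ceil_len_mix_ge q1 q2 t n : (forall j, 0 <= q1 j) -> (forall j, 0 <= q2 j) ->
  0 <= t <= 1 ->
  F (ceil_len q1 (floor_scale t n)) + F (ceil_len q2 (floor_scale (1 - t) n))
    - B * \sum_j (q1 j + q2 j + 2)
  <= F (ceil_len (fun j => t * q1 j + (1 - t) * q2 j) n).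
Proof.
move=> q10 q20 t01.
set l1 := ceil_len q1 _; set l2 := ceil_len q2 _; set l := ceil_len _ n.
have := F_superadd l1 l2; have := F_lipschitz (fun j => (l1 j + l2 j)%N) l.
have : B * \sum_j `|(l1 j + l2 j)%:R - (l j)%:R| <= B * \sum_j (q1 j + q2 j + 2).
  by apply: ler_wpM2l => //; apply: ler_sum => j _; exact: ceil_len_mix_gap.
lra.
Qed.

Lemma rate_concave q1 q2 t : (forall j, 0 <= q1 j) -> (forall j, 0 <= q2 j) ->
  0 <= t <= 1 ->
  t * rate q1 + (1 - t) * rate q2 <= rate (fun j => t * q1 j + (1 - t) * q2 j).
Proof.
move=> q10 q20 t01; have /andP[t0 t1] := t01; set q := fun j => _.
have q0 j : 0 <= q j by rewrite addr_ge0 // mulr_ge0 // subr_ge0.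
rewrite -[X in X <= _]subr0.
apply: (ler_cvg_to _ (rate_cvg q0)).
  apply: cvgB (cvg_div_nat (B * \sum_j (q1 j + q2 j + 2))).
  apply: cvgD (cvg_rate_floor_scale q10 t0) (cvg_rate_floor_scale q20 _).
  by rewrite subr_ge0.
near=> n; rewrite -mulrDl -mulrBl ler_wpM2r // ?invr_ge0 //.
exact: F_ceil_len_mix_ge.
Unshelve. all: end_near. Qed.

Hypothesis F_perm : forall (s : 'S_m) l, F l <= F (fun j => l (s j)).

Lemma rate_perm q (s : 'S_m) : (forall j, 0 <= q j) -> rate q <= rate (fun j => q (s j)).
Proof.
move=> q0; apply: ler_lim; [exact: rate_cvg | exact: rate_cvg | near=> n].
by rewrite ler_wpM2r ?invr_ge0 // F_perm.
Unshelve. all: end_near. Qed.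

Definition perm_mean q (s : seq 'S_m) j := (\sum_(σ <- s) q (σ j)) / (size s)%:R.

Lemma rate_le_perm_mean q s : (forall j, 0 <= q j) -> s != [::] ->
  rate q <= rate (perm_mean q s).
Proof.
move=> q0; elim: s => [//|σ s IH] _.
have [->|s_neq0] := eqVneq s [::].
  rewrite (_ : perm_mean q [:: σ] = fun j => q (σ j)); first exact: rate_perm.
  by apply/funext => j; rewrite /perm_mean big_seq1 divr1.
have k0 : 0 < (size s)%:R :> R by rewrite ltr0n lt0n size_eq0.
pose t : R := (size s)%:R / (size s).+1%:R.
have t01 : 0 <= t <= 1.
  by rewrite divr_ge0 //= ler_pdivrMr ?ltr0n // mul1r ler_nat.
have mean0 j : 0 <= perm_mean q s j by rewrite divr_ge0 // sumr_ge0.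
have -> : perm_mean q (σ :: s) = fun j => t * perm_mean q s j + (1 - t) * q (σ j).
  apply/funext => j; rewrite /perm_mean /t big_cons /= -natr1.
  by field; rewrite !gt_eqF // ltr_wpDr.
apply: le_trans (rate_concave mean0 (fun j => q0 (σ j)) t01).
have := IH s_neq0; have := rate_perm σ q0; move: t01 => /andP[? ?]; nra.
Qed.

Lemma perm_mean_enum q j : (0 < m)%N ->
  perm_mean q (enum 'S_m) j = (\sum_i q i) / m%:R.
Proof.
move=> m0; have S0 : (0 < #|'S_m|)%N by apply/card_gt0P; exists 1%g.
rewrite /perm_mean -cardE big_enum /=.
apply/eqP; rewrite eqr_div ?pnatr_eq0 -?lt0n //.
by rewrite !mulr_natr sum_perm_mulrn.
Qed.

Lemma rate_le_rate1 q : (0 < m)%N -> (forall j, 0 <= q j) -> \sum_j q j = m%:R ->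
  rate q <= rate (fun _ => 1).
Proof.
move=> m0 q0 q_sum.
rewrite (_ : (fun _ => 1) = perm_mean q (enum 'S_m)); last first.
  by apply/funext => j; rewrite perm_mean_enum // q_sum divff // pnatr_eq0 -lt0n.
apply: rate_le_perm_mean => //; apply/eqP => enum0.
by have := mem_enum 'S_m 1%g; rewrite enum0.
Qed.

End Rate.

Lemma size_pairwise_ltn (s : seq nat) lo hi : pairwise ltn s ->
  all (fun x => lo <= x < hi)%N s -> (size s <= hi - lo)%N.
Proof.
move=> s_lt /allP s_in; rewrite -(size_iota lo (hi - lo)).
apply: uniq_leq_size; first exact: pairwise_uniq ltnn s_lt.
by move=> x /s_in; rewrite -[iota _ _]/(index_iota lo hi) mem_index_iota.
Qed.

Lemma count_exists_le (T : Type) (I : finType) (P : I -> pred T) (s : seq T) :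
  (count (fun x => [exists i, P i x]) s <= \sum_i count (P i) s)%N.
Proof.
elim: s => [|x s IH]; first by rewrite big1.
rewrite /= big_split /= leq_add //.
by case: existsP => // -[i Pi]; rewrite (bigD1 i) //= Pi leq_addr.
Qed.

Section Columns.
Variables (R : realType) (A : {fset R}) (m : nat) (S : apoint A m -> R) (a0 : A).
Implicit Types (w : 'I_m -> seq A).

(* An alignment is handled as the sequence of its columns, the j-th entry of a
   column being the (0-based) position of the aligned letter in the j-th word. *)
Definition column := {ffun 'I_m -> nat}.

Definition column_lt (c c' : column) : bool := [forall j, (c j < c' j)%N].

Definition is_columns w (cs : seq column) : bool :=
  all (fun c : column => [forall j, (c j < size (w j))%N]) cs && pairwise column_lt cs.

Definition columns_score w (cs : seq column) : R :=
  \sum_(c <- cs) S [ffun j => nth a0 (w j) (c j)].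

Lemma size_columns_bounded (cs : seq column) j lo hi : pairwise column_lt cs ->
  all (fun c : column => lo <= c j < hi)%N cs -> (size cs <= hi - lo)%N.
Proof.
move=> cs_lt cs_in; rewrite -(size_map (fun c : column => c j)).
apply: size_pairwise_ltn; last by rewrite all_map.
by rewrite pairwise_map; apply: sub_pairwise cs_lt => c c' /forallP; apply.
Qed.

Lemma size_columns_le w cs j : is_columns w cs -> (size cs <= size (w j))%N.
Proof.
case/andP=> cs_in cs_lt; rewrite -[size (w j)]subn0.
apply: (size_columns_bounded (j := j)) cs_lt _.
by apply: sub_all cs_in => c /forallP /(_ j).
Qed.

Lemma columns_alignment w cs : is_columns w cs ->
  exists k (pi : forall j, 'I_k -> 'I_(size (w j))),
    is_alignment pi /\ align_score S pi = columns_score w cs.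
Proof.
case/andP=> cs_in cs_lt.
have lt_size j (i : 'I_(size cs)) : (nth [ffun=> 0%N] cs i j < size (w j))%N.
  by have /forallP := (all_nthP [ffun=> 0%N] cs_in) i (ltn_ord i); apply.
exists (size cs), (fun j i => Ordinal (lt_size j i)); split.
  move=> j i1 i2 lt12 /=.
  by have /forallP := (pairwiseP [ffun=> 0%N] cs_lt) i1 i2 (ltn_ord i1) (ltn_ord i2) lt12.
rewrite /align_score /columns_score (big_nth [ffun=> 0%N]) big_mkord.
by apply: eq_bigr => i _; congr S; apply/ffunP => j; rewrite !ffunE (tnth_nth a0).
Qed.

Lemma alignment_columns w k (pi : forall j, 'I_k -> 'I_(size (w j))) :
  is_alignment pi -> exists cs, is_columns w cs /\ align_score S pi = columns_score w cs.
Proof.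
move=> pi_lt; exists [seq [ffun j => nat_of_ord (pi j i)] | i <- enum 'I_k]; split.
  apply/andP; split.
    by rewrite all_map; apply/allP => i _ /=; apply/forallP => j; rewrite ffunE.
  rewrite pairwise_map.
  have : pairwise (relpre val ltn) (enum 'I_k).
    rewrite -pairwise_map val_enum_ord -sorted_pairwise ?iota_ltn_sorted //.
    exact: ltn_trans.
  by apply: sub_pairwise => i1 i2 /= lt12; apply/forallP => j; rewrite !ffunE; exact: pi_lt.
rewrite /columns_score big_map big_enum /align_score; apply: eq_bigr => i _.
by congr S; apply/ffunP => j; rewrite !ffunE (tnth_nth a0).
Qed.

Definition shift_column (d : 'I_m -> nat) (c : column) : column :=
  [ffun j => (d j + c j)%N].

Lemma is_columns_cat w1 w2 cs1 cs2 : is_columns w1 cs1 -> is_columns w2 cs2 ->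
  is_columns (fun j => w1 j ++ w2 j)
             (cs1 ++ map (shift_column (fun j => size (w1 j))) cs2).
Proof.
move=> /andP[cs1_in cs1_lt] /andP[cs2_in cs2_lt]; apply/andP; split.
  rewrite all_cat all_map; apply/andP; split.
    apply: sub_all cs1_in => c /forallP c_in; apply/forallP => j.
    by rewrite size_cat (leq_trans (c_in j)) ?leq_addr.
  apply: sub_all cs2_in => c /forallP c_in; apply/forallP => j.
  by rewrite /= ffunE size_cat ltn_add2l.
rewrite pairwise_cat pairwise_map cs1_lt; apply/andP; split.
  apply/allrelP => c _ c_in /mapP[c' _ ->]; apply/forallP => j; rewrite ffunE.
  by move/allP: cs1_in => /(_ c c_in) /forallP /(_ j) /leq_trans; apply; rewrite leq_addr.
apply: sub_pairwise cs2_lt => c c' /forallP lt_cc'.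
by apply/forallP => j; rewrite !ffunE ltn_add2l.
Qed.

Lemma columns_score_cat w1 w2 cs1 cs2 : is_columns w1 cs1 ->
  columns_score (fun j => w1 j ++ w2 j)
                (cs1 ++ map (shift_column (fun j => size (w1 j))) cs2)
  = columns_score w1 cs1 + columns_score w2 cs2.
Proof.
case/andP=> /allP cs1_in _; rewrite /columns_score big_cat big_map /=; congr (_ + _).
  rewrite big_seq [RHS]big_seq; apply: eq_bigr => c c_in; congr S.
  by apply/ffunP => j; rewrite !ffunE nth_cat; move/forallP: (cs1_in c c_in) => ->.
apply: eq_bigr => c _; congr S; apply/ffunP => j.
by rewrite !ffunE nth_cat ltnNge leq_addr /= addKn.
Qed.

Definition column_below (n : 'I_m -> nat) (c : column) : bool := [forall j, (c j < n j)%N].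

Lemma is_columns_take w n cs : is_columns w cs ->
  is_columns (fun j => take (n j) (w j)) [seq c <- cs | column_below n c].
Proof.
case/andP=> /allP cs_in cs_lt; apply/andP; split; last exact: pairwise_filter.
rewrite all_filter; apply/allP => c c_in; apply/implyP => /forallP c_below.
apply/forallP => j; rewrite size_take.
by case: ifP => _; [exact: c_below | move/forallP: (cs_in c c_in)].
Qed.

Lemma columns_score_take w n cs :
  columns_score (fun j => take (n j) (w j)) [seq c <- cs | column_below n c]
  = \sum_(c <- cs | column_below n c) S [ffun j => nth a0 (w j) (c j)].
Proof.
rewrite /columns_score big_filter big_seq_cond [RHS]big_seq_cond.
apply: eq_bigr => c /andP[_ /forallP c_below]; congr S.
by apply/ffunP => j; rewrite !ffunE nth_take.
Qed.

Lemma count_not_below w n cs : is_columns w cs ->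
  (count (predC (column_below n)) cs <= \sum_j (size (w j) - n j))%N.
Proof.
case/andP=> /allP cs_in cs_lt.
apply: (@leq_trans (count (fun c : column => [exists j, (n j <= c j)%N]) cs)).
  apply: sub_count => c /=; rewrite negb_forall => /existsP[j].
  by rewrite -leqNgt => n_le; apply/existsP; exists j.
apply: leq_trans (count_exists_le _ _) _; apply: leq_sum => j _; rewrite -size_filter.
apply: (size_columns_bounded (j := j)); first exact: pairwise_filter.
rewrite all_filter; apply/allP => c c_in; apply/implyP => ->.
by move/forallP: (cs_in c c_in) => ->.
Qed.

End Columns.

Section OptScore.
Variables (R : realType) (A : {fset R}) (m : nat) (S : apoint A m -> R) (a0 : A) (B : R).
Hypothesis m_gt0 : (0 < m)%N.
Hypothesis S_ge0 : forall x, 0 <= S x.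
Hypothesis S_le : forall x, S x <= B.
Implicit Types (w : 'I_m -> seq A) (cs : seq (column m)).
Local Notation score := (columns_score S a0).

Lemma bound_ge0 : 0 <= B.
Proof. exact: le_trans (S_ge0 [ffun=> a0]) (S_le _). Qed.

Lemma columns_score_ge0 w cs : 0 <= score w cs.
Proof. exact: sumr_ge0. Qed.

Lemma columns_score_le w cs : score w cs <= (size cs)%:R * B.
Proof.
elim: cs => [|c cs IH]; first by rewrite /columns_score big_nil mul0r.
by rewrite /columns_score big_cons -/(score w cs) /= -nat1r mulrDl mul1r lerD.
Qed.

Lemma opt_score_has_ubound w : has_ubound
  [set r : R | exists k (pi : forall j : 'I_m, 'I_k -> 'I_(size (w j))),
                 is_alignment pi /\ r = align_score S pi].
Proof.
exists ((size (w (Ordinal m_gt0)))%:R * B) => _ [k [pi [pi_lt ->]]].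
have [cs [cs_ok ->]] := alignment_columns S a0 pi_lt.
apply: le_trans (columns_score_le w cs) _; apply: ler_wpM2r; first exact: bound_ge0.
by rewrite ler_nat; apply: size_columns_le.
Qed.

Lemma columns_score_le_opt w cs : is_columns w cs -> score w cs <= opt_score S w.
Proof.
move=> cs_ok; have [k [pi [pi_lt e]]] := columns_alignment S a0 cs_ok.
by apply: (ub_le_sup (opt_score_has_ubound w)); exists k, pi.
Qed.

Lemma opt_score_le w x : (forall cs, is_columns w cs -> score w cs <= x) ->
  opt_score S w <= x.
Proof.
move=> score_le; apply: ge_sup.
  have [k [pi [pi_lt e]]] := columns_alignment S a0 (isT : is_columns w [::]).
  by exists (score w [::]), k, pi.
move=> _ [k [pi [pi_lt ->]]].
by have [cs [cs_ok ->]] := alignment_columns S a0 pi_lt; exact: score_le.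
Qed.

Lemma opt_score_ge0 w : 0 <= opt_score S w.
Proof.
apply: le_trans (columns_score_le_opt (isT : is_columns w [::])).
exact: columns_score_ge0.
Qed.

Lemma opt_score_add_le w1 w2 x :
  (forall cs1 cs2, is_columns w1 cs1 -> is_columns w2 cs2 ->
     score w1 cs1 + score w2 cs2 <= x) ->
  opt_score S w1 + opt_score S w2 <= x.
Proof.
move=> score_le; rewrite -lerBrDl; apply: opt_score_le => cs2 cs2_ok.
rewrite lerBrDl addrC -lerBrDl; apply: opt_score_le => cs1 cs1_ok.
by rewrite lerBrDl addrC; exact: score_le.
Qed.

Lemma opt_score_cat w1 w2 :
  opt_score S w1 + opt_score S w2 <= opt_score S (fun j => w1 j ++ w2 j).
Proof.
apply: opt_score_add_le => cs1 cs2 cs1_ok cs2_ok.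
rewrite -columns_score_cat //; apply: columns_score_le_opt; exact: is_columns_cat.
Qed.

Lemma opt_score_take w (n : 'I_m -> nat) :
  opt_score S (fun j => take (n j) (w j)) <= opt_score S w.
Proof.
have := opt_score_cat (fun j => take (n j) (w j)) (fun j => drop (n j) (w j)).
rewrite (_ : (fun j => _ ++ _) = w); last by apply/funext => j; rewrite cat_take_drop.
by have := opt_score_ge0 (fun j => drop (n j) (w j)); lra.
Qed.

Lemma opt_score_le_take w (n : 'I_m -> nat) :
  opt_score S w <= opt_score S (fun j => take (n j) (w j))
                   + B * (\sum_j (size (w j) - n j))%N%:R.
Proof.
apply: opt_score_le => cs cs_ok; rewrite /columns_score (bigID (column_below n)) /=.
rewrite -columns_score_take; apply: lerD.
  by apply: columns_score_le_opt; exact: is_columns_take.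
rewrite -big_filter; apply: le_trans (columns_score_le _ _) _.
rewrite size_filter mulrC ler_wpM2l ?ler_nat ?bound_ge0 //.
exact: count_not_below.
Qed.

Hypothesis S_perm : forall (s : 'S_m) (x : apoint A m), S [ffun j => x (s j)] = S x.

Lemma opt_score_perm w (s : 'S_m) : opt_score S w <= opt_score S (fun j => w (s j)).
Proof.
apply: opt_score_le => cs /andP[cs_in cs_lt].
pose f (c : column m) : column m := [ffun j => c (s j)].
have -> : score w cs = score (fun j => w (s j)) (map f cs).
  rewrite /columns_score big_map; apply: eq_bigr => c _.
  by rewrite -[LHS](S_perm s); congr S; apply/ffunP => j; rewrite !ffunE.
apply: columns_score_le_opt; apply/andP; split.
  rewrite all_map; apply: sub_all cs_in => c /forallP c_in.
  by apply/forallP => j; rewrite /= ffunE.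
rewrite pairwise_map; apply: sub_pairwise cs_lt => c c' /forallP lt_cc'.
by apply/forallP => j; rewrite !ffunE.
Qed.

End OptScore.

Lemma mkseq_take T (f : nat -> T) k n : take k (mkseq f n) = mkseq f (minn k n).
Proof. by rewrite /mkseq -map_take take_iota. Qed.

Lemma mkseqD T (f : nat -> T) a b :
  mkseq f (a + b) = mkseq f a ++ mkseq (fun i => f (a + i)%N) b.
Proof.
by rewrite /mkseq iotaD map_cat add0n -[in iota a b](addn0 a) iotaDl -map_comp.
Qed.

Lemma eq_in_mkseq T (f g : nat -> T) n :
  (forall i, (i < n)%N -> f i = g i) -> mkseq f n = mkseq g n.
Proof. by move=> fg; apply/eq_in_map => i; rewrite mem_iota add0n => /fg. Qed.

Section SampleSpace.
Variables (R : realType) (A : {fset R}) (m : nat) (p : A -> R).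
Hypothesis p_ge0 : forall a, 0 <= p a.
Hypothesis p_sum1 : \sum_a p a = 1.
Local Notation sample N := {ffun 'I_m * 'I_N -> A}.

Lemma sample_prob_ge0 N (ω : sample N) : 0 <= sample_prob p ω.
Proof. exact: prodr_ge0. Qed.

Lemma sum_sample_prob N : \sum_(ω : sample N) sample_prob p ω = 1.
Proof.
rewrite /sample_prob -(bigA_distr_bigA (fun _ (a : A) => p a)) /=.
by rewrite big1 // => x _; rewrite p_sum1.
Qed.

Section Restriction.
Variables (N N' : nat) (h : 'I_m * 'I_N' -> 'I_m * 'I_N).
Hypothesis h_inj : injective h.

Definition restrict (ω : sample N) : sample N' :=
  [ffun x => ω (h x)].

Lemma sum_sample_prob_restrict (ω' : sample N') :
  \sum_(ω | restrict ω == ω') sample_prob p ω = sample_prob p ω'.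
Proof.
(* The fibre is the family of samples agreeing with ω' on the image of h and
   free elsewhere; each free coordinate contributes a factor \sum_a p a = 1. *)
pose Q x (a : A) := [forall y, (h y == x) ==> (a == ω' y)].
rewrite (eq_bigl (fun ω => ω \in family Q)); last first.
  move=> ω /=; apply/eqP/familyP => [ω_eq x | ωQ].
    by apply/forallP => y; apply/implyP => /eqP <-; rewrite -ω_eq ffunE.
  apply/ffunP => y; rewrite ffunE.
  by have /forallP /(_ y) := ωQ (h y); rewrite eqxx => /eqP.
rewrite /sample_prob -(bigA_distr_big_dep Q (fun _ (a : A) => p a)) /=.
pose G x := if [pick y | h y == x] is Some y then p (ω' y) else 1.
rewrite (eq_bigr G); last first.
  move=> x _; rewrite /G; case: pickP => [y /eqP hy | no_y].
    rewrite (eq_bigl (pred1 (ω' y))) ?big_pred1_eq // => a.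
    apply/forallP/eqP => [/(_ y) | -> y']; first by rewrite hy eqxx => /eqP.
    by apply/implyP => /eqP; rewrite -hy => /h_inj ->.
  rewrite (eq_bigl predT) ?p_sum1 // => a; apply/forallP => y.
  by rewrite no_y.
rewrite (bigID (mem (h @: [set: 'I_m * 'I_N'])%SET)) /= [X in _ * X]big1 ?mulr1.
  rewrite big_imset /=; last by move=> y1 y2 _ _; exact: h_inj.
  apply: eq_big => [y | y _]; first by rewrite !inE.
  by rewrite /G; case: pickP => [y' /eqP /h_inj -> | /(_ y)] //; rewrite eqxx.
move=> x x_out; rewrite /G; case: pickP => // y /eqP hy.
by move: x_out; rewrite -hy imset_f ?inE.
Qed.

Lemma sum_sample_prob_restrictE (φ : sample N' -> R) :
  \sum_ω sample_prob p ω * φ (restrict ω) = \sum_ω' sample_prob p ω' * φ ω'.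
Proof.
rewrite (partition_big restrict predT) //=; apply: eq_bigr => ω' _.
rewrite (eq_bigr (fun ω => sample_prob p ω * φ ω')) => [|ω /eqP -> //].
by rewrite -mulr_suml sum_sample_prob_restrict.
Qed.

End Restriction.

Section ExpectedScore.
Variables (S : apoint A m -> R) (a0 : A) (B : R).
Hypothesis m_gt0 : (0 < m)%N.
Hypothesis S_ge0 : forall x, 0 <= S x.
Hypothesis S_le : forall x, S x <= B.

(* Positions beyond the sample are filled with the dummy letter a0. *)
Definition sample_letter N (ω : sample N) j (i : nat) : A :=
  if insub i is Some o then ω (j, o) else a0.

Lemma sample_letterE N (ω : sample N) j (i : 'I_N) :
  sample_letter ω j i = ω (j, i).
Proof. by rewrite /sample_letter valK. Qed.

Lemma sample_word_mkseq N (ω : sample N) ns j :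
  sample_word ω ns j = mkseq (sample_letter ω j) (minn (ns j) N).
Proof.
rewrite /sample_word -mkseq_take; congr take.
by rewrite /mkseq -val_enum_ord -map_comp; apply: eq_map => i /=; rewrite sample_letterE.
Qed.

Lemma mkseq_letter_restrict N N' (h : 'I_m * 'I_N' -> 'I_m * 'I_N) ω j k j' d :
  (k <= N')%N -> (forall i : 'I_N', (h (j, i)).1 = j' /\ val (h (j, i)).2 = (d + i)%N) ->
  mkseq (sample_letter (restrict h ω) j) k
  = mkseq (fun i => sample_letter ω j' (d + i)) k.
Proof.
move=> kN' hE; apply: eq_in_mkseq => i ik.
have iN' : (i < N')%N := leq_trans ik kN'.
have [<- <-] := hE (Ordinal iN').
by rewrite -[i]/(val (Ordinal iN')) !sample_letterE ffunE -surjective_pairing.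
Qed.

Definition opt_score_sample N (ω : sample N) (ns : 'I_m -> nat) : R :=
  opt_score S (fun j => mkseq (sample_letter ω j) (ns j)).

Lemma expected_LE ns N : (forall j, (ns j <= N)%N) ->
  expected_L S p ns = \sum_(ω : sample N) sample_prob p ω * opt_score_sample ω ns.
Proof.
move=> ns_le; rewrite /expected_L /=; set N0 := (\max_(j < m) ns j)%N.
have ns_le0 j : (ns j <= N0)%N by apply: leq_bigmax.
have N0_le : (N0 <= N)%N by apply/bigmax_leqP => j _; exact: ns_le.
rewrite (eq_bigr (fun ω : sample N0 => sample_prob p ω * opt_score_sample ω ns));
  last first.
  move=> ω _; congr (_ * opt_score S _); apply/funext => j.
  by rewrite sample_word_mkseq (minn_idPl (ns_le0 j)).
pose h (x : 'I_m * 'I_N0) : 'I_m * 'I_N := (x.1, widen_ord N0_le x.2).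
have h_inj : injective h.
  by move=> [j1 i1] [j2 i2] [-> e]; congr pair; exact: val_inj.
rewrite -(sum_sample_prob_restrictE h_inj (fun ω => opt_score_sample ω ns)).
apply: eq_bigr => ω _; rewrite /opt_score_sample; congr (_ * opt_score S _).
by apply/funext => j; rewrite (mkseq_letter_restrict (j' := j) (d := 0%N) _ (ns_le0 j)).
Qed.

Lemma expected_L_ge0 ns : 0 <= expected_L S p ns.
Proof.
apply: sumr_ge0 => ω _; apply: mulr_ge0; first exact: sample_prob_ge0.
exact: opt_score_ge0.
Qed.

Lemma expected_L_superadditive (l l' : 'I_m -> nat) :
  expected_L S p l + expected_L S p l' <= expected_L S p (fun j => (l j + l' j)%N).
Proof.
set N1 := (\max_(j < m) l j)%N; set N2 := (\max_(j < m) l' j)%N.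
have l_le j : (l j <= N1)%N by apply: leq_bigmax.
have l'_le j : (l' j <= N2)%N by apply: leq_bigmax.
rewrite (@expected_LE (fun j => (l j + l' j)%N) (N1 + N2)) => [|j]; last exact: leq_add.
rewrite (@expected_LE l (N1 + N2)) => [|j]; last exact: leq_trans (l_le j) (leq_addr _ _).
rewrite (@expected_LE l' N2) //.
have shift_lt j (i : 'I_N2) : (l j + i < N1 + N2)%N by rewrite -addnS leq_add.
pose h (x : 'I_m * 'I_N2) : 'I_m * 'I_(N1 + N2) := (x.1, Ordinal (shift_lt x.1 x.2)).
have h_inj : injective h.
  by move=> [j1 i1] [j2 i2] [e1]; subst j2 => /addnI e2; congr pair; exact: val_inj.
rewrite -(sum_sample_prob_restrictE h_inj (fun ω => opt_score_sample ω l')).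
rewrite -big_split; apply: ler_sum => ω _ /=; rewrite -mulrDr.
apply: ler_wpM2l; first exact: sample_prob_ge0.
have split_words : (fun j => mkseq (sample_letter ω j) (l j + l' j))
    = (fun j => mkseq (sample_letter ω j) (l j)
                ++ mkseq (sample_letter (restrict h ω) j) (l' j)).
  apply/funext => j.
  by rewrite mkseqD (mkseq_letter_restrict (j' := j) (d := l j) _ (l'_le j)).
by rewrite /opt_score_sample split_words; exact: opt_score_cat.
Qed.

Lemma sum_sample_prob_le_add N (X Y : sample N -> R) c : (forall ω, X ω <= Y ω + c) ->
  \sum_ω sample_prob p ω * X ω <= \sum_ω sample_prob p ω * Y ω + c.
Proof.
move=> XY; rewrite -[c in X in _ <= X]mul1r -(sum_sample_prob N) mulr_suml -big_split.
apply: ler_sum => ω _ /=; rewrite -mulrDr ler_wpM2l //; exact: sample_prob_ge0.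
Qed.

Lemma expected_L_lipschitz (l l' : 'I_m -> nat) :
  expected_L S p l - expected_L S p l' <= B * \sum_j `|(l j)%:R - (l' j)%:R|.
Proof.
(* Compare both sides with the truncation to the lengths min (l j) (l' j). *)
pose l'' j := minn (l j) (l' j).
set N := (\max_(j < m) l j + \max_(j < m) l' j)%N.
have l_le j : (l j <= N)%N by apply: leq_trans (leq_addr _ _); apply: leq_bigmax.
have l'_le j : (l' j <= N)%N by apply: leq_trans (leq_addl _ _); apply: leq_bigmax.
have l''_le j : (l'' j <= N)%N by apply: leq_trans (geq_minl _ _) (l_le j).
have mono : expected_L S p l'' <= expected_L S p l'.
  rewrite (@expected_LE l'' N) // (@expected_LE l' N) //; apply: ler_sum => ω _.
  rewrite ler_wpM2l ?sample_prob_ge0 // /opt_score_sample.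
  rewrite (_ : (fun j => _) = fun j => take (l'' j) (mkseq (sample_letter ω j) (l' j))).
    exact: opt_score_take.
  by apply/funext => j; rewrite mkseq_take (minn_idPl (geq_minr _ _)).
have lip : expected_L S p l <= expected_L S p l'' + B * (\sum_j (l j - l'' j))%N%:R.
  rewrite (@expected_LE l N) // (@expected_LE l'' N) //.
  apply: sum_sample_prob_le_add => ω.
  have := opt_score_le_take a0 m_gt0 S_ge0 S_le
    (fun j => mkseq (sample_letter ω j) (l j)) l''.
  rewrite /opt_score_sample
    (_ : (fun j => take _ _) = fun j => mkseq (sample_letter ω j) (l'' j)).
    by under eq_bigr do rewrite size_mkseq.
  by apply/funext => j; rewrite mkseq_take (minn_idPl (geq_minl _ _)).
have dist : ((\sum_j (l j - l'' j))%N%:R : R) <= \sum_j `|(l j)%:R - (l' j)%:R|.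
  rewrite natr_sum; apply: ler_sum => j _; rewrite /l''.
  have [_ | /ltnW l'_le_l] := leqP (l j) (l' j); first by rewrite subnn normr_ge0.
  by rewrite natrB // ler_norm.
have := ler_wpM2l (bound_ge0 a0 S_ge0 S_le) dist; lra.
Qed.

Hypothesis S_perm : forall (s : 'S_m) (x : apoint A m), S [ffun j => x (s j)] = S x.

Lemma expected_L_perm (s : 'S_m) (l : 'I_m -> nat) :
  expected_L S p l <= expected_L S p (fun j => l (s j)).
Proof.
set N := (\max_(j < m) l j)%N.
have l_le j : (l j <= N)%N by apply: leq_bigmax.
rewrite (@expected_LE l N) // (@expected_LE (fun j => l (s j)) N) //.
pose h (x : 'I_m * 'I_N) : 'I_m * 'I_N := ((s^-1)%g x.1, x.2).
have h_inj : injective h by move=> [j1 i1] [j2 i2] [/perm_inj -> ->].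
rewrite -(sum_sample_prob_restrictE h_inj (fun ω => opt_score_sample ω l)).
apply: ler_sum => ω _; rewrite ler_wpM2l ?sample_prob_ge0 //.
apply: le_trans (opt_score_perm a0 m_gt0 S_ge0 S_le S_perm _ s) _.
rewrite /opt_score_sample le_eqVlt; apply/orP; left; apply/eqP.
congr opt_score; apply/funext => j.
by rewrite (mkseq_letter_restrict (j' := j) (d := 0%N) _ (l_le (s j))) //= permK.
Qed.

End ExpectedScore.

End SampleSpace.

Local Close Scope classical_set_scope.

Theorem proposition3p1 (R : realType) (m : nat) (A : {fset R})
    (p : A -> R) (S : apoint A m -> R) :
  (2 <= m)%N ->
  (* law of the i.i.d. letters: a probability distribution on A *)
  (forall a, 0 <= p a) -> \sum_(a : A) p a = 1 ->
  (* hypotheses on S *)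
  (forall x, 0 <= S x) ->
  (exists x, S x != 0) ->
  (forall (s : 'S_m) (x : apoint A m), S [ffun j => x (s j)] = S x) ->
  (exists B : R, forall x, S x <= B) ->
  (exists D : R, 0 < D /\
     forall x y : apoint A m, (#|[set j | x j != y j]| <= 1)%N ->
       `|S x - S y| <= D) ->
  (* concavity on Q *)
  (forall (q1 q2 : 'I_m -> R) (t : R), domQ q1 -> domQ q2 -> 0 <= t <= 1 ->
     t * gamma_tilde S p q1 + (1 - t) * gamma_tilde S p q2
       <= gamma_tilde S p (fun j => t * q1 j + (1 - t) * q2 j))
  /\
  (* maximum at q = (1,...,1) *)
  (forall q : 'I_m -> R, domQ q -> gamma_tilde S p q <= gamma_tilde S p (fun _ => 1)).
Proof.
move=> m_ge2 p_ge0 p_sum1 S_ge0 _ S_perm [B S_le] _.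
have m_gt0 : (0 < m)%N := ltnW m_ge2.
have [a0 _ | A_empty] := pickP (@predT A); last first.
  by move: p_sum1; rewrite big_pred0 // => /eqP; rewrite eq_sym oner_eq0.
have B_ge0 := bound_ge0 a0 S_ge0 S_le.
have E_ge0 := expected_L_ge0 p_ge0 a0 m_gt0 S_ge0 S_le.
have E_add := expected_L_superadditive p_ge0 p_sum1 a0 m_gt0 S_ge0 S_le.
have E_lip := expected_L_lipschitz p_ge0 p_sum1 a0 m_gt0 S_ge0 S_le.
have E_perm := expected_L_perm p_ge0 p_sum1 a0 m_gt0 S_ge0 S_le S_perm.
split=> [q1 q2 t [q1_gt0 _] [q2_gt0 _] | q [q_gt0 q_sum]].
  exact: rate_concave B_ge0 E_ge0 E_add E_lip _ _ _
    (fun j => ltW (q1_gt0 j)) (fun j => ltW (q2_gt0 j)).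
exact: rate_le_rate1 B_ge0 E_ge0 E_add E_lip E_perm _ m_gt0 (fun j => ltW (q_gt0 j)) q_sum.
Qed.
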